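(* Let $(N,C,\mathbf{A},k)$ be an instance with $|N|=n$ and let $\lambda\in[0,\frac{n}{k^2})$. Every committee output by $\lambda$-LS-PAV (from any initial committee) — i.e., every $W\subseteq C$ with $|W|=k$ such that there are no $c^+\in C\setminus W$, $c^-\in W$ with $\Delta(W,c^+,c^-)\ge\lambda$ — has EJR degree at least $\frac{n}{k(k+1)}-\lambda\frac{k}{k+1}$.
   Context: An instance consists of voters $N=\{1,\dots,n\}$, candidates $C$, approval ballots $A_i\subseteq C$ for $i\in N$, and a committee size $k$ with $1\le k\le|C|$. For $\ell\in\mathbb{N}$, $N'\subseteq N$ is an $\ell$-cohesive group if $|N'|\ge\ell n/k$ and $|\bigcap_{i\in N'}A_i|\ge\ell$. A size-$k$ committee $W$ achieves EJR degree $c$ if for every $\ell\in\{1,\dots,k\}$ every $\ell$-cohesive group contains at least $c$ voters $i$ with $|A_i\cap W|\ge\ell$. The PAV-score of $W$ is $s_{\mathrm{PAV}}(W)=\sum_{i=1}^n\sum_{j=1}^{|A_i\cap W|}\frac1j$, and $\Delta(W,c^+,c^-)=s_{\mathrm{PAV}}((W\setminus\{c^-\})\cup\{c^+\})-s_{\mathrm{PAV}}(W)$. The algorithm $\lambda$-LS-PAV starts from an arbitrary size-$k$ committee $W$ and, while there exist $c^+\notin W$ and $c^-\in W$ with $\Delta(W,c^+,c^-)\ge\lambda$, replaces $W$ by $(W\setminus\{c^-\})\cup\{c^+\}$; it then outputs $W$. *)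

From HB Require Import structures.
From mathcomp Require Import all_boot all_order all_algebra.
Set Implicit Arguments. Unset Strict Implicit. Unset Printing Implicit Defensive.
Import Order.TTheory GRing.Theory Num.Theory.
Local Open Scope ring_scope.

Section Defs.
Variables (R : realFieldType) (C : finType) (n : nat).

Definition harmonic (m : nat) : R := \sum_(1 <= j < m.+1) (j%:R)^-1.

Definition pav_score (A : 'I_n -> {set C}) (W : {set C}) : R :=
  \sum_(i < n) harmonic #|A i :&: W|.

Definition pav_delta (A : 'I_n -> {set C}) (W : {set C}) (cp cm : C) : R :=
  pav_score A (cp |: (W :\ cm)) - pav_score A W.

Definition cohesive (A : 'I_n -> {set C}) (k l : nat) (N' : {set 'I_n}) : Prop :=
  (l%:R * n%:R / k%:R <= (#|N'|%:R : R)) /\ (l <= #|\bigcap_(i in N') A i|)%N.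

Definition ejr_degree (A : 'I_n -> {set C}) (k : nat) (W : {set C}) (c : R) : Prop :=
  forall l : nat, (1 <= l <= k)%N -> forall N' : {set 'I_n},
    cohesive A k l N' ->
    c <= (#|[set i in N' | (l <= #|A i :&: W|)%N]|%:R : R).

Definition ls_pav_output (A : 'I_n -> {set C}) (k : nat) (lam : R) (W : {set C}) : Prop :=
  #|W| = k /\ forall cp cm : C, cp \notin W -> cm \in W -> pav_delta A W cp cm < lam.

End Defs.

(* If all candidates common to an l-cohesive group N' lie in W, every member
   of N' has l representatives.  Otherwise pick a common candidate c+ outside W
   and add up the swap gains Delta(W, c+, c-) over all c- in W.  Local
   optimality bounds this sum by lam * k.  Per voter, the sum is at least -1,
   and at least (k+1)/(a+1) - 1 >= (k+1)/l - 1 for a member of N' with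
   a < l representatives, since that member approves c+.  So the number u of
   such members satisfies u (k+1)/l - n <= lam * k; as |N'| >= l n / k, at
   least l (n/(k(k+1)) - lam k/(k+1)) members of N' are satisfied. *)

From HB Require Import structures.
From mathcomp Require Import all_boot all_order all_algebra.
From mathcomp Require Import ring lra.
Set Implicit Arguments. Unset Strict Implicit. Unset Printing Implicit Defensive.
Import Order.TTheory GRing.Theory Num.Theory.
Local Open Scope ring_scope.

Lemma harmonicS_sub (R : realFieldType) m :
  harmonic R m.+1 - harmonic R m = m.+1%:R^-1.
Proof. by rewrite /harmonic [X in X - _]big_nat_recr // addrAC subrr add0r. Qed.

Lemma sum_mem_split (V : nmodType) (T : finType) (S W : {set T}) (F : bool -> V) :
  \sum_(x in W) F (x \in S) = F true *+ #|S :&: W| + F false *+ (#|W| - #|S :&: W|).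
Proof.
rewrite (bigID (mem S)) /= setIC -cardsD -!sumr_const.
congr (_ + _); apply: eq_big => [x | x /andP[_ Sx]].
- by rewrite !inE andbC.
- by rewrite Sx.
- by rewrite !inE andbC.
- by rewrite (negbTE Sx).
Qed.

Lemma card_setI_swap (T : finType) (S W : {set T}) cp cm :
  cp \notin W -> cm \in W ->
  #|S :&: (cp |: (W :\ cm))| = ((cp \in S) + (#|S :&: W| - (cm \in S)))%N.
Proof.
move=> cpW cmW.
have -> : #|S :&: W| = ((cm \in S) + #|S :&: W :\ cm|)%N.
  by rewrite (cardsD1 cm) !inE cmW andbT.
rewrite addKn setIUr setIDA.
case: (boolP (cp \in S)) => cpS.
  by rewrite (setIidPr _) ?sub1set // cardsU1 !inE (negbTE cpW) !andbF.
have -> : S :&: [set cp] = set0.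
  by apply/setP => x; rewrite !inE andbC; case: eqP => // ->; rewrite (negbTE cpS).
by rewrite set0U.
Qed.

Definition voter_swap_gain (R : realFieldType) (T : finType) (S W : {set T}) cp : R :=
  \sum_(cm in W) (harmonic R #|S :&: (cp |: (W :\ cm))| - harmonic R #|S :&: W|).

Lemma voter_swap_gainE (R : realFieldType) (T : finType) (S W : {set T}) cp :
  cp \notin W ->
  voter_swap_gain R S W cp =
    if cp \in S then (#|W| - #|S :&: W|)%:R / (#|S :&: W|.+1)%:R
    else if #|S :&: W| == 0%N then 0 else -1.
Proof.
move=> cpW; rewrite /voter_swap_gain.
under eq_bigr => cm cmW do rewrite card_setI_swap //.
rewrite (sum_mem_split _ _
  (fun b => harmonic R ((cp \in S) + (#|S :&: W| - b)) - harmonic R #|S :&: W|)).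
case: #|S :&: W| => [|a]; case: (cp \in S); rewrite ?subn0 ?subn1 ?add0n ?add1n /=.
- by rewrite mulr0n add0r harmonicS_sub mulr_natl.
- by rewrite subrr !mul0rn addr0.
- by rewrite subrr mul0rn add0r harmonicS_sub mulr_natl.
- rewrite subrr mul0rn addr0 -opprB harmonicS_sub -[(- _) *+ _]mulr_natr.
  by rewrite mulNr mulVf ?pnatr_eq0.
Qed.

Lemma voter_swap_gain_ge (R : realFieldType) (T : finType) (S W : {set T}) cp :
  cp \notin W ->
  (if cp \in S then (#|W|.+1)%:R / (#|S :&: W|.+1)%:R else 0) - 1
    <= voter_swap_gain R S W cp.
Proof.
move=> cpW; rewrite voter_swap_gainE //.
have aW : (#|S :&: W| <= #|W|)%N by rewrite subset_leq_card ?subsetIr.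
case: (cp \in S); last by case: eqP => _; lra.
rewrite natrB // [leRHS](_ : _ = #|W|.+1%:R / #|S :&: W|.+1%:R - 1) //.
by rewrite -!natr1; field; rewrite natr1 pnatr_eq0.
Qed.

Lemma ejr_bound_le (R : realFieldType) (n k l lam good bad : R) :
  1 <= k -> 1 <= l -> 0 <= good -> l * n / k <= good + bad ->
  (k + 1) / l * bad - n <= lam * k ->
  n / (k * (k + 1)) - lam * (k / (k + 1)) <= good.
Proof.
move=> k_ge1 l_ge1 good_ge0 cohesive_large bad_small.
have k_gt0 : 0 < k by lra.
have l_gt0 : 0 < l by lra.
set d := n / (k * (k + 1)) - lam * (k / (k + 1)).
have bad_le : bad <= l * (n + lam * k) / (k + 1).
  rewrite ler_pdivlMr; last lra.
  have := ler_wpM2l (ltW l_gt0) bad_small.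
  have -> : l * ((k + 1) / l * bad - n) = bad * (k + 1) - l * n.
    by field; rewrite gt_eqF.
  lra.
have ld_le : l * d <= good.
  have -> : l * d = l * n / k - l * (n + lam * k) / (k + 1).
    by rewrite /d; field; rewrite !gt_eqF //; lra.
  lra.
have [d_le0 | d_gt0] := lerP d 0; first lra.
nra.
Qed.

Lemma sum_pav_delta (R : realFieldType) (C : finType) (n : nat)
    (A : 'I_n -> {set C}) (W : {set C}) cp :
  \sum_(cm in W) pav_delta R A W cp cm = \sum_(i < n) voter_swap_gain R (A i) W cp.
Proof.
rewrite /voter_swap_gain exchange_big /=; apply: eq_bigr => cm _.
by rewrite /pav_delta /pav_score -sumrB.
Qed.

Section LocalSearchOutput.
Variables (R : realFieldType) (C : finType) (n : nat) (A : 'I_n -> {set C}).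
Variables (k : nat) (lam : R) (W : {set C}).
Hypothesis W_output : ls_pav_output A k lam W.

Lemma ls_pav_sum_gain_le cp :
  cp \notin W -> \sum_(i < n) voter_swap_gain R (A i) W cp <= lam * k%:R.
Proof.
case: W_output => cardW stable cpW.
rewrite -sum_pav_delta -cardW mulr_natr -sumr_const.
by apply: ler_sum => cm cmW; rewrite ltW ?stable.
Qed.

Lemma ls_pav_unsatisfied_le (l : nat) (N' : {set 'I_n}) cp :
  (0 < l)%N -> cp \notin W -> cp \in \bigcap_(i in N') A i ->
  (k%:R + 1) / l%:R * #|[set i in N' | (#|A i :&: W| < l)%N]|%:R - n%:R
    <= lam * k%:R.
Proof.
move=> l_gt0 cpW /bigcapP cp_common.
set U := [set i in N' | _].
apply: le_trans (ls_pav_sum_gain_le cpW).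
have -> : (k%:R + 1) / l%:R * #|U|%:R - n%:R =
          \sum_(i < n) ((if i \in U then (k%:R + 1) / l%:R else 0) - 1) :> R.
  by rewrite sumrB -big_mkcond /= !sumr_const card_ord mulr_natr.
apply: ler_sum => i _; apply: le_trans (voter_swap_gain_ge _ _ cpW).
rewrite lerD2r; case: W_output => cardW _.
case: ifP => [/setIdP[iN' unsat] | _]; last first.
  by case: ifP => _ //; rewrite divr_ge0.
rewrite cp_common // cardW -natr1 ler_pM2l ?natr1 ?ltr0n //.
by rewrite lef_pV2 ?posrE ?ltr0n // ler_nat.
Qed.

End LocalSearchOutput.

Theorem proposition3 (R : realFieldType) (C : finType) (n : nat)
    (A : 'I_n -> {set C}) (k : nat) (lam : R) (W : {set C}) :
  (1 <= k)%N -> (k <= #|C|)%N ->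
  0 <= lam -> lam < n%:R / (k%:R ^+ 2) ->
  ls_pav_output A k lam W ->
  ejr_degree A k W (n%:R / (k%:R * (k%:R + 1)) - lam * (k%:R / (k%:R + 1))).
Proof.
(* [k <= #|C|] and [lam < n / k^2] only make the instance and the bound
   non-degenerate; the inequality holds without them. *)
move=> k_ge1 _ lam_ge0 _ W_output l /andP[l_ge1 _] N' [N'_large l_le_common].
set good := [set i in N' | _].
set bad := [set i in N' | (#|A i :&: W| < l)%N].
have card_N' : #|N'| = (#|good| + #|bad|)%N.
  rewrite -(cardsID [set i | l <= #|A i :&: W|]%N N').
  by congr (_ + _)%N; apply: eq_card => i; rewrite !inE -?ltnNge // andbC.
have bad_small : (k%:R + 1) / l%:R * #|bad|%:R - n%:R <= lam * k%:R.
  have [common_sub | /subsetPn[cp cp_common cpW]] :=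
    boolP (\bigcap_(i in N') A i \subset W); last first.
    exact: (ls_pav_unsatisfied_le W_output l_ge1 cpW cp_common).
  suff -> : bad = set0.
    by rewrite cards0 mulr0 sub0r (le_trans _ (mulr_ge0 lam_ge0 (ler0n _ k))) ?oppr_le0.
  apply/setP => i; rewrite !inE; apply/andP => -[iN']; apply/negP; rewrite -leqNgt.
  apply: (leq_trans l_le_common); apply: subset_leq_card.
  by rewrite subsetI bigcap_inf.
apply: ejr_bound_le bad_small; rewrite ?ler1n ?ler0n //.
by rewrite -natrD -card_N'.
Qed.
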